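(* Let $\Gamma$ and $\Gamma'$ be connected strongly regular graphs with the same parameters $(n,k,a,c)$, with vertex sets $X$, $X'$, and let $x\in X$, $x'\in X'$. Let $i\in\{1,2\}$. Let $v\in E^*_i(x)V$ be an eigenvector of $E^*_i(x)AE^*_i(x)$ with eigenvalue $\lambda$ such that $\langle \mathbf{1},v\rangle=0$, and let $v'\in E'^*_i(x')V'$ be an eigenvector of $E'^*_i(x')A'E'^*_i(x')$ with eigenvalue $\lambda'$ such that $\langle \mathbf{1},v'\rangle=0$. Then $\lambda=\lambda'$ if and only if there exists a $\mathbb{C}$-linear bijection $\rho:T(x)v\to T'(x')v'$ with $\rho Aw=A'\rho w$ and $\rho E^*_j(x)w=E'^*_j(x')\rho w$ for all $w\in T(x)v$ and all $j$.
   Context: A strongly regular graph with parameters $(n,k,a,c)$ is a $k$-regular graph on $n$ vertices in which every pair of adjacent vertices has exactly $a$ common neighbours and every pair of distinct non-adjacent vertices has exactly $c$ common neighbours. For $\Gamma$ with vertex set $X$, distance $\partial$ and diameter $D$, let $A$ be its adjacency matrix, $V=\mathbb{C}^X$ with the standard Hermitian inner product $\langle u,w\rangle=u^t\overline{w}$, $\mathbf{1}$ the all-ones vector, and $E^*_j(x)$ ($0\le j\le D$) the diagonal matrix with $(E^*_j(x))_{yy}=1$ if $\partial(x,y)=j$ and $0$ otherwise. The Terwilliger algebra $T(x)$ is the subalgebra of $\mathrm{Mat}_X(\mathbb{C})$ generated by $A,E^*_0(x),\dots,E^*_D(x)$, and $T(x)v=\{Bv:B\in T(x)\}$. The same notation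 with primes is used for $\Gamma'$. *)

From mathcomp Require Import all_boot all_order all_algebra.
From mathcomp Require Export algC.
Set Implicit Arguments. Unset Strict Implicit. Unset Printing Implicit Defensive.
Import Order.TTheory GRing.Theory Num.Theory.
Local Open Scope ring_scope.

Section Graphs.
Variable n : nat.

Definition srg (k a c : nat) (e : rel 'I_n) : Prop :=
  [/\ symmetric e, irreflexive e,
      (forall x, #|[set y | e x y]| = k),
      (forall x y, e x y -> #|[set z | e x z && e y z]| = a)
    & (forall x y, x != y -> ~~ e x y -> #|[set z | e x z && e y z]| = c)].

Definition connected_graph (e : rel 'I_n) : Prop := forall x y, connect e x y.

Definition walkb (e : rel 'I_n) (x y : 'I_n) (j : nat) : bool :=
  [exists p : j.-tuple 'I_n, path e x p && (last x p == y)].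

(* path-length distance (least length of a walk; = n if unreachable) *)
Definition gdist (e : rel 'I_n) (x y : 'I_n) : nat :=
  find (walkb e x y) (iota 0 n).

Definition diam (e : rel 'I_n) : nat :=
  (\max_(y : 'I_n) \max_(z : 'I_n) gdist e y z)%N.

Definition adjmx (e : rel 'I_n) : 'M[algC]_n :=
  \matrix_(y, z) (e y z)%:R.

Definition dualidem (e : rel 'I_n) (x : 'I_n) (j : nat) : 'M[algC]_n :=
  \matrix_(y, z) ((y == z) && (gdist e x y == j))%:R.

Inductive in_alg (gens : seq 'M[algC]_n) : 'M[algC]_n -> Prop :=
  | in_alg_gen B : B \in gens -> in_alg gens B
  | in_alg_one : in_alg gens 1%:M
  | in_alg_add B C : in_alg gens B -> in_alg gens C -> in_alg gens (B + C)
  | in_alg_scale (al : algC) B : in_alg gens B -> in_alg gens (al *: B)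
  | in_alg_mul B C : in_alg gens B -> in_alg gens C -> in_alg gens (B *m C).

(* generators of the Terwilliger algebra T(x): A, E^*_0(x), ..., E^*_D(x) *)
Definition terw_gens (e : rel 'I_n) (x : 'I_n) : seq 'M[algC]_n :=
  adjmx e :: [seq dualidem e x j | j <- iota 0 (diam e).+1].

Definition in_Tmod (e : rel 'I_n) (x : 'I_n) (v w : 'cV[algC]_n) : Prop :=
  exists B, in_alg (terw_gens e x) B /\ w = B *m v.

Definition ip_one (v : 'cV[algC]_n) : algC := \sum_(y < n) (v y 0)^*.

Definition Tmod_iso (e : rel 'I_n) (x : 'I_n) (v : 'cV[algC]_n)
    (e' : rel 'I_n) (x' : 'I_n) (v' : 'cV[algC]_n)
    (rho : 'cV[algC]_n -> 'cV[algC]_n) : Prop :=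
  [/\ (forall (al : algC) u w, in_Tmod e x v u -> in_Tmod e x v w ->
         rho (al *: u + w) = al *: rho u + rho w) /\
      (forall u, in_Tmod e x v u -> in_Tmod e' x' v' (rho u)),
      (forall u w, in_Tmod e x v u -> in_Tmod e x v w -> rho u = rho w -> u = w),
      (forall w', in_Tmod e' x' v' w' -> (exists w, in_Tmod e x v w /\ rho w = w')),
      (forall w, in_Tmod e x v w -> rho (adjmx e *m w) = adjmx e' *m rho w)
    & (forall (j : nat) w, in_Tmod e x v w ->
         rho (dualidem e x j *m w) = dualidem e' x' j *m rho w)].

End Graphs.

(* Put w := A v - lam v.  As v lives on the sphere Gamma_i(x) (i = 1, 2) and sums to 0,
   (A v)_y vanishes at y = x and beyond distance 2, while the eigenvalue equation kills w
   on Gamma_i(x); so w lives on Gamma_(3-i)(x).  The strongly regular identity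
   A^2 = (k - c) I + (a - c) A + c J then gives A w = mu v + (a - c - lam) w with
   mu = k - c + (a - c - lam) lam.  Hence T(x)v = span(v, w), with structure constants
   depending only on lam and the parameters; moreover w = 0 iff mu = 0, because w is
   orthogonal to v and A is symmetric.  So equal eigenvalues give isomorphic modules, and
   conversely an isomorphism sends v to a multiple of v' and intertwines E^*_i A E^*_i,
   forcing lam = lam'. *)
From mathcomp Require Import all_boot all_order all_algebra.
From mathcomp Require Import algC zify ring.
Import GRing.Theory Num.Theory Num.Def.
Set Implicit Arguments. Unset Strict Implicit. Unset Printing Implicit Defensive.

Lemma find_iota_eq (P : pred nat) s m j :
  (find P (iota s m) == j) =
  [&& ~~ has P (iota s j), (j == m) || P (s + j) & j <= m].
Proof.
elim: m s j => [|m IHm] s [|j] /=; rewrite ?andbF ?addn0 ?andbT //.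
  by case: (P s).
by case: (P s) => //=; rewrite eqSS IHm addSnnS ltnS.
Qed.

Lemma neq_ord_gt1 n (x y : 'I_n) : x != y -> 1 < n.
Proof. by case: x y => [x ltxn] [y ltyn]; rewrite -val_eqE /=; lia. Qed.

Section Distance.
Variables (n : nat) (e : rel 'I_n).

Lemma walkb0 x y : walkb e x y 0 = (x == y).
Proof.
apply/existsP/idP => [[p /andP[_ /eqP <-]]|/eqP->]; first by rewrite tuple0.
by exists [tuple]; rewrite /= eqxx.
Qed.

Lemma walkb1 x y : walkb e x y 1 = e x y.
Proof.
apply/existsP/idP => [[p]|exy]; last by exists [tuple y]; rewrite /= exy eqxx.
by case: p => [[|z []]] //= _; rewrite andbT => /andP[exz /eqP <-].
Qed.

Lemma walkb2 x y : walkb e x y 2 = [exists z, e x z && e z y].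
Proof.
apply/existsP/existsP => [[p]|[z /andP[exz ezy]]].
  case: p => [[|z [|t []]]] //= _; rewrite andbT => /andP[/andP[exz ezt] /eqP tE].
  by exists z; rewrite exz -tE ezt.
by exists [tuple z; y]; rewrite /= exz ezy eqxx.
Qed.

Lemma gdist_eq x y j :
  (gdist e x y == j) =
  [&& ~~ has (walkb e x y) (iota 0 j), (j == n) || walkb e x y j & j <= n].
Proof. exact: find_iota_eq. Qed.

Hypothesis irr_e : irreflexive e.

Lemma gdist_eq1 x y : (gdist e x y == 1) = e x y.
Proof.
rewrite gdist_eq /= walkb0 walkb1.
have [<-|/neq_ord_gt1 n_gt1] := eqVneq x y; first by rewrite irr_e.
by rewrite ltn_eqF ?(ltnW n_gt1) // andbT.
Qed.

(* [gdist] is [n] on unreachable vertices, so for [n = 2] a non-neighbour is at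
   "distance 2" without any common neighbour. *)
Lemma gdist_eq2 x y :
  (gdist e x y == 2) =
  [&& x != y, ~~ e x y & (n == 2) || [exists z, e x z && e z y]].
Proof.
rewrite gdist_eq /= walkb0 walkb1 walkb2 orbF negb_or -andbA.
have [<-|nxy] //= := eqVneq x y; have [//|_] /= := boolP (e x y).
by rewrite (neq_ord_gt1 nxy) andbT eq_sym.
Qed.

End Distance.

Section StronglyRegular.
Variables (n k a c : nat) (e : rel 'I_n).
Hypothesis srg_e : srg k a c e.

Lemma srg_common_card y z :
  #|[set t | e y t && e z t]| = if y == z then k else if e y z then a else c.
Proof.
have [sym_e irr_e deg_e adj_e nadj_e] := srg_e.
have [<-|nyz] := eqVneq y z; last by case: ifPn => [/adj_e|/nadj_e->].
by rewrite -(deg_e y); apply: eq_card => t; rewrite !inE andbb.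
Qed.

Lemma srg_gdist2 x y0 y :
  gdist e x y0 == 2 -> x != y -> ~~ e x y -> gdist e x y == 2.
Proof.
have [sym_e irr_e _ _ _] := srg_e.
rewrite !gdist_eq2 // => /and3P[nxy0 nexy0 /orP[->|/existsP[z /andP[exz ezy0]]]]
  nxy nexy.
  by rewrite nxy nexy.
have c_gt0 : 0 < c.
  have := srg_common_card x y0; rewrite (negbTE nxy0) (negbTE nexy0) => <-.
  by rewrite card_gt0; apply/set0Pn; exists z; rewrite inE exz sym_e.
move: c_gt0; have := srg_common_card x y; rewrite (negbTE nxy) (negbTE nexy) => <-.
rewrite card_gt0 => /set0Pn[t]; rewrite inE => /andP[ext eyt].
by apply/orP; right; apply/existsP; exists t; rewrite ext sym_e.
Qed.

End StronglyRegular.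

Local Open Scope ring_scope.

Lemma dotmx_mulmx_adjoint n (M : 'M[algC]_n) (u w : 'cV[algC]_n) :
  M^T = map_mx conjC M -> dotmx (M *m u)^T w^T = dotmx u^T (M *m w)^T.
Proof.
by move=> MT; rewrite !dotmxE trmx_mul !trmxK map_mxM -MT mulmxA.
Qed.

Section Spheres.
Variables (n : nat) (e : rel 'I_n) (x : 'I_n).

Definition on_sphere (j : nat) (u : 'cV[algC]_n) : Prop := dualidem e x j *m u = u.

Lemma dualidem_mulE j (u : 'cV[algC]_n) y :
  (dualidem e x j *m u) y 0 = (gdist e x y == j)%:R * u y 0.
Proof.
rewrite mxE (bigD1 y) //= mxE eqxx big1 ?addr0 // => z /negbTE nzy.
by rewrite mxE eq_sym nzy mul0r.
Qed.

Lemma adjmx_mulE (u : 'cV[algC]_n) y :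
  (adjmx e *m u) y 0 = \sum_z (e y z)%:R * u z 0.
Proof. by rewrite mxE; apply: eq_bigr => z _; rewrite mxE. Qed.

Lemma on_sphereP j u :
  on_sphere j u <-> forall y, gdist e x y != j -> u y 0 = 0.
Proof.
split=> [uE y /negbTE gj|u0]; first by rewrite -uE dualidem_mulE gj mul0r.
apply/colP => y; rewrite dualidem_mulE.
by have [_|/u0->] := eqVneq (gdist e x y) j; rewrite ?mul1r ?mulr0.
Qed.

Lemma on_sphere_dualidem j u : on_sphere j (dualidem e x j *m u).
Proof.
by apply/on_sphereP => y /negbTE gj; rewrite dualidem_mulE gj mul0r.
Qed.

Lemma dualidem_on_sphere j l u :
  on_sphere j u -> dualidem e x l *m u = (l == j)%:R *: u.
Proof.
move=> /on_sphereP u0; apply/colP => y; rewrite dualidem_mulE mxE.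
have [gj|/u0->] := eqVneq (gdist e x y) j; last by rewrite !mulr0.
by rewrite gj eq_sym.
Qed.

Lemma dualidem_herm j : (dualidem e x j)^T = map_mx conjC (dualidem e x j).
Proof.
apply/matrixP => y z; rewrite !mxE conjC_nat.
by have [->|nyz] := eqVneq z y; rewrite ?eqxx // eq_sym (negbTE nyz).
Qed.

Lemma adjmx_herm : symmetric e -> (adjmx e)^T = map_mx conjC (adjmx e).
Proof. by move=> sym_e; apply/matrixP => y z; rewrite !mxE conjC_nat sym_e. Qed.

End Spheres.

Lemma on_sphere_disjoint n (e : rel 'I_n) x i j (v w : 'cV[algC]_n) :
  i != j -> on_sphere e x i v -> on_sphere e x j w -> forall y, v y 0 * w y 0 = 0.
Proof.
move=> ij /on_sphereP v0 /on_sphereP w0 y.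
have [gi|/v0->] := eqVneq (gdist e x y) i; last by rewrite mul0r.
by rewrite w0 ?mulr0 // gi.
Qed.

Lemma in_alg_stable n (gens : seq 'M[algC]_n) (S : 'cV[algC]_n -> Prop) :
  (forall u u', S u -> S u' -> S (u + u')) -> (forall al u, S u -> S (al *: u)) ->
  (forall G, G \in gens -> forall u, S u -> S (G *m u)) ->
  forall B, in_alg gens B -> forall u, S u -> S (B *m u).
Proof.
move=> SD SZ Sgens B; elim=> {B} [G /Sgens //|u|B C _ SB _ SC u Su|al B _ SB u Su|
                                  B C _ SB _ SC u Su].
- by rewrite mul1mx.
- by rewrite mulmxDl; apply: SD; [apply: SB | apply: SC].
- by rewrite -scalemxAl; apply/SZ/SB.
- by rewrite -mulmxA; apply/SB/SC.
Qed.

Definition span2 n (v w u : 'cV[algC]_n) : Prop := exists al be, u = al *: v + be *: w.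

Definition sphere_pair n (e : rel 'I_n) x i j (v w : 'cV[algC]_n) (lam mu bet : algC) :=
  [/\ on_sphere e x i v, on_sphere e x j w,
      adjmx e *m v = lam *: v + w & adjmx e *m w = mu *: v + bet *: w].

Section SpherePair.
Variables (n : nat) (e : rel 'I_n) (x : 'I_n) (i j : nat).
Variables (v w : 'cV[algC]_n) (lam mu bet : algC).
Hypothesis pair : sphere_pair e x i j v w lam mu bet.

Lemma sphere_pair_adjmx al be :
  adjmx e *m (al *: v + be *: w) = (al * lam + be * mu) *: v + (al + be * bet) *: w.
Proof.
have [_ _ Av Aw] := pair; rewrite mulmxDr -!scalemxAr Av Aw.
by apply/colP => y; rewrite !mxE; ring.
Qed.

Lemma sphere_pair_dualidem l al be :
  dualidem e x l *m (al *: v + be *: w) =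
  (al * (l == i)%:R) *: v + (be * (l == j)%:R) *: w.
Proof.
have [Sv Sw _ _] := pair.
rewrite mulmxDr -!scalemxAr.
by rewrite (dualidem_on_sphere _ Sv) (dualidem_on_sphere _ Sw) !scalerA.
Qed.

Lemma in_Tmod_span2 u : in_Tmod e x v u <-> span2 v w u.
Proof.
split=> [[B [algB ->]]|[al [be ->]]].
  apply: (in_alg_stable _ _ _ algB); last by exists 1, 0; rewrite scale1r scale0r addr0.
  - move=> _ _ [a1 [b1 ->]] [a2 [b2 ->]]; exists (a1 + a2), (b1 + b2).
    by rewrite addrACA -!scalerDl.
  - by move=> al _ [a1 [b1 ->]]; exists (al * a1), (al * b1); rewrite scalerDr !scalerA.
  move=> G; rewrite inE => /orP[/eqP->|/mapP[l _ ->]] _ [a1 [b1 ->]].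
    by rewrite sphere_pair_adjmx; eexists _, _.
  by rewrite sphere_pair_dualidem; eexists _, _.
have [_ _ Av _] := pair.
exists (al *: 1%:M + be *: (adjmx e + (- lam) *: 1%:M)); split.
  do ![apply: in_alg_add | apply: in_alg_scale | apply: in_alg_one].
  by apply: in_alg_gen; rewrite inE eqxx.
by rewrite mulmxDl -!scalemxAl mulmxDl -scalemxAl !mul1mx Av scaleNr addrAC subrr add0r.
Qed.

Lemma sphere_pair_eigen :
  i != j -> dualidem e x i *m (adjmx e *m v) = lam *: v.
Proof.
have [_ _ Av _] := pair; rewrite Av -[w]scale1r => ij.
by rewrite sphere_pair_dualidem eqxx (negbTE ij) !mulr0 scale0r addr0 mulr1.
Qed.

Lemma sphere_pair_eq0 :
  symmetric e -> i != j -> v != 0 -> (w = 0 <-> mu = 0).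
Proof.
move=> sym_e ij vnz; have [Sv Sw Av Aw] := pair.
split=> [w0|mu0].
  move: Aw; rewrite w0 mulmx0 scaler0 addr0 => /esym/eqP.
  by rewrite scaler_eq0 (negbTE vnz) orbF => /eqP.
have wv : dotmx w^T v^T = 0.
  rewrite -Sv -dotmx_mulmx_adjoint ?dualidem_herm // (dualidem_on_sphere _ Sw).
  by rewrite (negbTE ij) scale0r trmx0 linear0l.
have wA : dotmx w^T (adjmx e *m v)^T = 0.
  rewrite -dotmx_mulmx_adjoint ?adjmx_herm // Aw mu0 scale0r add0r.
  by rewrite linearZ linearZl_LR /= wv mulr0.
have wE : w = adjmx e *m v - lam *: v by rewrite Av addrAC subrr add0r.
have /eqP : dotmx w^T w^T = 0.
  by rewrite {2}wE linearB linearZ linearBr linearZr_LR /= wA wv mulr0 subr0.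
by rewrite dnorm_eq0 => /eqP/(congr1 trmx); rewrite trmxK trmx0.
Qed.

End SpherePair.

Lemma span2_map_exists n (v w v' w' : 'cV[algC]_n) :
  v != 0 -> (forall y, v y 0 * w y 0 = 0) -> (w = 0 -> w' = 0) ->
  exists f : 'cV[algC]_n -> 'cV[algC]_n,
    (forall al u u', f (al *: u + u') = al *: f u + f u') /\
    (forall al be, f (al *: v + be *: w) = al *: v' + be *: w').
Proof.
move=> /cV0Pn[y0 vy0] vw ww'.
have wy0 : w y0 0 = 0 by have /eqP := vw y0; rewrite mulf_eq0 (negbTE vy0) => /eqP.
have [y1 y1P] : exists y1, (w y1 0 != 0 /\ v y1 0 = 0) \/ w' = 0.
  have [/ww' w'0|/cV0Pn[y1 wy1]] := eqVneq w 0; first by exists y0; right.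
  exists y1; left; split=> //.
  by have /eqP := vw y1; rewrite mulf_eq0 (negbTE wy1) orbF => /eqP.
exists (fun u => (u y0 0 / v y0 0) *: v' + (u y1 0 / w y1 0) *: w'); split.
  by move=> al u u'; apply/colP => y; rewrite !mxE; ring.
move=> al be; rewrite !mxE wy0 mulr0 addr0 mulfK //.
by case: y1P => [[wy1 ->]|->]; rewrite ?mulr0 ?add0r ?mulfK // !scaler0.
Qed.

Section TwoSpherePairs.
Variables (n : nat) (e e' : rel 'I_n) (x x' : 'I_n) (i j : nat).
Variables (v w v' w' : 'cV[algC]_n).
Hypothesis ij : i != j.

Lemma Tmod_iso_eigenvalue lam mu bet lam' mu' bet' rho :
  sphere_pair e x i j v w lam mu bet -> sphere_pair e' x' i j v' w' lam' mu' bet' ->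
  v != 0 -> Tmod_iso e x v e' x' v' rho -> lam = lam'.
Proof.
move=> pair pair' vnz [[rhoL rhoT] rho_inj _ rhoA rhoE].
have T u : span2 v w u -> in_Tmod e x v u by move/(in_Tmod_span2 pair).
have T0 : in_Tmod e x v 0 by apply: T; exists 0, 0; rewrite !scale0r addr0.
have Tv : in_Tmod e x v v by apply: T; exists 1, 0; rewrite scale1r scale0r addr0.
have [Sv _ Av _] := pair.
have TAv : in_Tmod e x v (adjmx e *m v) by apply: T; exists lam, 1; rewrite scale1r.
have rho0 : rho 0 = 0.
  by have := rhoL 1 0 0 T0 T0; rewrite !scale1r !addr0 -{1}[rho 0]addr0 => /addrI <-.
have rhoZ al u : in_Tmod e x v u -> rho (al *: u) = al *: rho u.
  by move=> Tu; rewrite -[al *: u]addr0 rhoL // rho0 addr0.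
have [al rvE] : exists al, rho v = al *: v'.
  have [al [be rvE]] := (in_Tmod_span2 pair' _).1 (rhoT v Tv); exists al.
  rewrite -Sv rhoE // rvE (sphere_pair_dualidem pair') eqxx (negbTE ij).
  by rewrite mulr1 mulr0 scale0r addr0.
have rv_neq0 : rho v != 0.
  by apply: contra_neq vnz => rv0; apply: rho_inj Tv T0 _; rewrite rv0 rho0.
have : lam *: rho v = lam' *: rho v.
  rewrite -rhoZ // -(sphere_pair_eigen pair ij) rhoE // rhoA // rvE.
  by rewrite -scalemxAr -scalemxAr (sphere_pair_eigen pair' ij) scalerA mulrC -scalerA.
move/eqP; rewrite -subr_eq0 -scalerBl scaler_eq0 (negbTE rv_neq0) orbF subr_eq0.
by move/eqP.
Qed.

Lemma sphere_pairs_Tmod_iso lam mu bet :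
  sphere_pair e x i j v w lam mu bet -> sphere_pair e' x' i j v' w' lam mu bet ->
  v != 0 -> v' != 0 -> (w = 0 <-> w' = 0) -> exists rho, Tmod_iso e x v e' x' v' rho.
Proof.
move=> pair pair' vnz vnz' ww'.
have [Sv Sw _ _] := pair; have [Sv' Sw' _ _] := pair'.
have [f [fL fE]] :=
  @span2_map_exists _ v w v' w' vnz (on_sphere_disjoint ij Sv Sw) (proj1 ww').
have [g [_ gE]] :=
  @span2_map_exists _ v' w' v w vnz' (on_sphere_disjoint ij Sv' Sw') (proj2 ww').
have T := in_Tmod_span2 pair; have T' := in_Tmod_span2 pair'.
exists f; split.
- split=> [al u u' _ _|u /T[al [be ->]]]; first exact: fL.
  by rewrite fE; apply/T'; exists al, be.
- by move=> u u' /T[al [be ->]] /T[al' [be' ->]]; rewrite !fE => /(congr1 g); rewrite !gE.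
- move=> u' /T'[al [be ->]]; exists (al *: v + be *: w); split; last exact: fE.
  by apply/T; exists al, be.
- move=> u /T[al [be ->]].
  by rewrite (sphere_pair_adjmx pair) !fE (sphere_pair_adjmx pair').
- move=> l u /T[al [be ->]].
  by rewrite (sphere_pair_dualidem pair) !fE (sphere_pair_dualidem pair').
Qed.

End TwoSpherePairs.

Section StronglyRegularSphere.
Variables (n k a c : nat) (e : rel 'I_n) (x : 'I_n) (i : nat).
Hypotheses (srg_e : srg k a c e) (i12 : i = 1%N \/ i = 2%N).

Lemma srg_adjmx_sqr :
  adjmx e *m adjmx e =
  (k%:R - c%:R) *: 1%:M + (a%:R - c%:R) *: adjmx e + c%:R *: const_mx 1.
Proof.
have [sym_e irr_e _ _ _] := srg_e.
apply/matrixP => y z; rewrite !mxE.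
transitivity (#|[set t | e y t && e z t]|%:R : algC).
  rewrite -sum1dep_card natr_sum [RHS]big_mkcond; apply: eq_bigr => t _.
  by rewrite !mxE (sym_e t z) -natrM mulnb; case: (_ && _).
rewrite (srg_common_card srg_e).
have [<-|_] := eqVneq y z; first by rewrite irr_e /=; ring.
by case: (e y z) => /=; ring.
Qed.

Lemma srg_adjmx_on_sphere (v : 'cV[algC]_n) lam :
  on_sphere e x i v -> \sum_y v y 0 = 0 ->
  dualidem e x i *m (adjmx e *m v) = lam *: v ->
  on_sphere e x (3 - i) (adjmx e *m v - lam *: v).
Proof.
move=> /on_sphereP v0 sum0 EAv; have [sym_e irr_e _ _ _] := srg_e.
have vS z : v z 0 != 0 -> gdist e x z == i by apply: contraR => /v0->.
apply/on_sphereP => y gy.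
have -> : (adjmx e *m v - lam *: v) y 0 = (adjmx e *m v) y 0 - lam * v y 0.
  by rewrite !mxE.
have [gi|ngi] := eqVneq (gdist e x y) i.
  have := dualidem_mulE e x i (adjmx e *m v) y.
  by rewrite EAv gi eqxx mul1r mxE => <-; rewrite subrr.
have [gy1 gy2] : gdist e x y != 1%N /\ gdist e x y != 2%N.
  by case: i12 gy ngi => -> /= gy ngi; split.
rewrite v0 // mulr0 subr0 adjmx_mulE.
have [<-|nxy] := eqVneq x y.
  case: i12 vS => -> vS.
    rewrite -[RHS]sum0; apply: eq_bigr => z _.
    have [->|/vS] := eqVneq (v z 0) 0; first by rewrite mulr0.
    by rewrite gdist_eq1 // => ->; rewrite mul1r.
  apply: big1 => z _; have [->|/vS] := eqVneq (v z 0) 0; first by rewrite mulr0.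
  by rewrite gdist_eq2 // => /and3P[_ /negbTE-> _]; rewrite mul0r.
have nexy : ~~ e x y by rewrite -gdist_eq1.
apply: big1 => z _; have [->|/vS gz] := eqVneq (v z 0) 0; first by rewrite mulr0.
case ezy: (e y z); last by rewrite mul0r.
case/negP: gy2; case: i12 gz => -> gz; last exact: (srg_gdist2 srg_e gz nxy nexy).
rewrite gdist_eq2 // nxy nexy /=; apply/orP; right; apply/existsP; exists z.
by rewrite -gdist_eq1 // gz sym_e.
Qed.

Lemma srg_sphere_pair (v : 'cV[algC]_n) lam :
  (exists u, v = dualidem e x i *m u) ->
  dualidem e x i *m adjmx e *m dualidem e x i *m v = lam *: v -> ip_one v = 0 ->
  sphere_pair e x i (3 - i) v (adjmx e *m v - lam *: v) lam
    (k%:R - c%:R + (a%:R - c%:R - lam) * lam) (a%:R - c%:R - lam).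
Proof.
move=> [u vE] eig ip0.
have Sv : on_sphere e x i v by rewrite vE; apply: on_sphere_dualidem.
have EAv : dualidem e x i *m (adjmx e *m v) = lam *: v.
  by rewrite -eig -mulmxA Sv mulmxA.
have sum0 : \sum_y v y 0 = 0.
  by apply/eqP; rewrite -conjC_eq0 rmorph_sum; apply/eqP.
have Jv : (const_mx 1 : 'M_n) *m v = 0.
  by apply/colP => y; rewrite !mxE -[RHS]sum0; apply: eq_bigr => z _; rewrite mxE mul1r.
split=> //; first exact: srg_adjmx_on_sphere.
  by rewrite addrC subrK.
rewrite mulmxBr mulmxA srg_adjmx_sqr !mulmxDl -!scalemxAl mul1mx Jv scaler0 addr0.
by rewrite -scalemxAr; move: (adjmx e *m v) => Av; apply/colP => y; rewrite !mxE; ring.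
Qed.

End StronglyRegularSphere.

Theorem lemma5p10 (n k a c : nat) (e e' : rel 'I_n) (x x' : 'I_n) (i : nat)
    (v v' : 'cV[algC]_n) (lam lam' : algC) :
  srg k a c e -> connected_graph e ->
  srg k a c e' -> connected_graph e' ->
  (i = 1%N \/ i = 2%N) ->
  (exists u, v = dualidem e x i *m u) -> v != 0 ->
  dualidem e x i *m adjmx e *m dualidem e x i *m v = lam *: v ->
  ip_one v = 0 ->
  (exists u', v' = dualidem e' x' i *m u') -> v' != 0 ->
  dualidem e' x' i *m adjmx e' *m dualidem e' x' i *m v' = lam' *: v' ->
  ip_one v' = 0 ->
  (lam = lam' <-> exists rho, Tmod_iso e x v e' x' v' rho).
Proof.
move=> srg_e _ srg_e' _ i12 vE vnz eig ip0 vE' vnz' eig' ip0'.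
have ij : i != (3 - i)%N by case: i12 => ->.
have pair := srg_sphere_pair srg_e i12 vE eig ip0.
have pair' := srg_sphere_pair srg_e' i12 vE' eig' ip0'.
split=> [lam_eq|[rho iso]]; last exact: (Tmod_iso_eigenvalue ij pair pair' vnz iso).
rewrite -lam_eq in pair'; apply: (sphere_pairs_Tmod_iso ij pair pair' vnz vnz').
have [sym_e _ _ _ _] := srg_e; have [sym_e' _ _ _ _] := srg_e'.
exact: iff_trans (sphere_pair_eq0 pair sym_e ij vnz)
                 (iff_sym (sphere_pair_eq0 pair' sym_e' ij vnz')).
Qed.
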